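(* For all integers $d\ge1$ and $k$ with $d+1\le k\le 2d$, $\theta^{\rm D}(k,d)=1$.
   Context: Fix integers $d\ge1$ and $1\le k\le 2d$. The directed $k$-neighbor graph ($k$-DnG) on $\mathbb{Z}^d$ is the random directed graph obtained by letting each vertex $x\in\mathbb{Z}^d$, independently of all other vertices, choose a uniformly random subset of exactly $k$ of its $2d$ nearest neighbors (in $\ell_1$-distance), and placing a directed edge from $x$ to each chosen neighbor. We write $\theta^{\rm D}(k,d)=\mathbb{P}(o\rightsquigarrow\infty \text{ in the $k$-DnG on }\mathbb{Z}^d)$, where $o$ is the origin and $o\rightsquigarrow\infty$ is the event that there is an infinite self-avoiding directed path along edges of the $k$-DnG starting at $o$. *)

From HB Require Import structures.
From mathcomp Require Import all_boot all_order all_algebra.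
From mathcomp Require Import all_classical all_reals all_analysis.
Set Implicit Arguments. Unset Strict Implicit. Unset Printing Implicit Defensive.
Import Order.TTheory GRing.Theory Num.Theory.

Definition site (d : nat) := {ffun 'I_d -> int}.
Definition origin (d : nat) : site d := [ffun _ => 0%R].

(* The 2d nearest-neighbour directions: (coordinate i, sign b);
   b = true means +e_i, b = false means -e_i. *)
Definition dir (d : nat) := ('I_d * bool)%type.

Definition step (d : nat) (x : site d) (e : dir d) : site d :=
  [ffun j => if j == e.1 then (x j + (if e.2 then 1 else -1))%R else x j].

Definition dedge (d : nat) (c : site d -> {set dir d}) (x y : site d) : Prop :=
  exists2 e, e \in c x & y = step x e.

Definition reaches_infinity (d : nat) (c : site d -> {set dir d}) (x : site d)
  : Prop :=
  exists p : nat -> site d,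
    [/\ p 0%N = x, injective p & forall n, dedge c (p n) (p n.+1)].

(* C is (the random configuration of) the k-DnG on Z^d under probability P:
   each C x is uniform on the k-subsets of the 2d neighbour directions,
   and the C x, x in Z^d, are mutually independent. *)
Local Open Scope classical_set_scope.
Definition is_kDnG {R : realType} (d k : nat) {dm : measure_display}
  {Omega : measurableType dm} (P : probability Omega R)
  (C : site d -> Omega -> {set dir d}) : Prop :=
  [/\ (forall (x : site d) (S : {set dir d}), measurable [set w : Omega | C x w = S]),
      (forall (x : site d) (w : Omega), #|C x w| = k),
      (forall (x : site d) (S : {set dir d}), #|S| = k ->
         P [set w | C x w = S] = ((('C(2 * d, k))%:R)^-1)%:E) &
      (forall (n : nat) (xs : 'I_n -> site d) (Ss : 'I_n -> {set dir d}),
         injective xs ->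
         P [set w | forall i : 'I_n, C (xs i) w = Ss i] =
         (\prod_(i < n) fine (P [set w | C (xs i) w = Ss i]))%:E)].

From HB Require Import structures.
From mathcomp Require Import all_boot all_order all_algebra.
From mathcomp Require Import all_classical all_reals all_analysis.
Local Open Scope classical_set_scope.

(* When k > d, every vertex has at least one edge in a positive coordinate
   direction, by pigeonhole on the d negative directions.  Following such an
   edge at every step raises the coordinate sum by one, so the resulting path
   never revisits a site: the origin reaches infinity for every configuration,
   not merely almost surely. *)

Import GRing.Theory Num.Theory.
Local Open Scope ring_scope.

Section DirectedPaths.

Variable d : nat.

Definition coord_sum (x : site d) : int := \sum_(j < d) x j.

Lemma coord_sum_step_pos (x : site d) (i : 'I_d) :
  coord_sum (step x (i, true)) = coord_sum x + 1.
Proof.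
rewrite /coord_sum (eq_bigr (fun j => x j + (j == i)%:R)) => [|j _].
  rewrite big_split /=; congr (_ + _).
  by rewrite (bigD1 i) //= eqxx big1 ?addr0 // => j /negPf ->.
by rewrite ffunE /=; case: eqP; rewrite ?addr0.
Qed.

Lemma pos_dir_of_card_gt (S : {set dir d}) :
  (d < #|S|)%N -> exists i, (i, true) \in S.
Proof.
move=> ltdS; apply/existsP; apply: contraLR ltdS => /existsPn noPos.
rewrite -leqNgt -[d in (_ <= d)%N]card_ord -cardsT.
apply: leq_trans (leq_imset_card (fun i => (i, false)) _).
apply/subset_leq_card/fintype.subsetP => -[i [|]] iS.
  by have := noPos i; rewrite iS.
by apply/imsetP; exists i; rewrite ?in_setT.
Qed.

Lemma reaches_infinity_of_height (c : site d -> {set dir d})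
    (h : site d -> int) :
  (forall x, exists y, dedge c x y /\ h y = h x + 1) ->
  forall x, reaches_infinity c x.
Proof.
move=> /choice[next next_up] x.
pose p n := iter n next x.
have h_p n : h (p n) = h x + n%:R.
  by elim: n => [|n IHn]; rewrite ?addr0 // /p iterS (next_up _).2 IHn -natr1 addrA.
exists p; split => // [m n /(congr1 h)|n].
  by rewrite !h_p => /addrI /eqP; rewrite eqr_nat => /eqP.
by rewrite /p iterS; exact: (next_up _).1.
Qed.

Lemma reaches_infinity_of_pos_dir (c : site d -> {set dir d}) :
  (forall x, exists i, (i, true) \in c x) ->
  forall x, reaches_infinity c x.
Proof.
move=> has_pos; apply: (reaches_infinity_of_height _ coord_sum) => x.
have [i ic] := has_pos x.
exists (step x (i, true)); split; first by exists (i, true).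
exact: coord_sum_step_pos.
Qed.

End DirectedPaths.

Theorem lemma2p2 (R : realType) (d k : nat) (dm : measure_display)
  (Omega : measurableType dm) (P : probability Omega R)
  (C : site d -> Omega -> {set dir d}) :
  (1 <= d)%N -> (d + 1 <= k)%N -> (k <= 2 * d)%N ->
  is_kDnG k P C ->
  ({ae P, forall w, reaches_infinity (fun x => C x w) (origin d)}).
Proof.
move=> _ ltdk _ [_ card_C _ _].
apply: aeW => w; apply: reaches_infinity_of_pos_dir => x.
by apply: pos_dir_of_card_gt; rewrite card_C -addn1.
Qed.
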